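(* Let $q\ge 2$, and let $\mathcal{C}\subseteq \Sigma^n$ be a code over an alphabet $\Sigma$ of size $q$ with $|\mathcal{C}|=q^k$ and locality $r$. Suppose $s:=n \bmod (r+1)\notin\{0,1\}$, and let $m:=\lceil n/(r+1)\rceil$. Suppose $\mathcal{C}$ has $m$ pairwise disjoint repair groups $A_1,\dots,A_m\subseteq\{1,\dots,n\}$ with $|A_i|=r+1$ for $i=1,\dots,m-1$ and $|A_m|=s$. If either $r\mid k$, or $r\nmid k$ and $k \bmod r\ge s$, then the minimum Hamming distance of $\mathcal{C}$ satisfies $$d_{\min}(\mathcal{C})\le n-k-\Big\lceil\frac{k}{r}\Big\rceil+1.$$
   Context: A code $\mathcal{C}$ of length $n$ has locality $r$ if for every coordinate $i\in\{1,\dots,n\}$ there is a set $I_i\subseteq\{1,\dots,n\}\setminus\{i\}$ with $|I_i|=r$ such that for every codeword $c=(c_1,\dots,c_n)\in\mathcal{C}$, $c_i$ is a function of $(c_l)_{l\in I_i}$; such a code with $|\mathcal{C}|=q^k$ is called an $(n,k,r)$ LRC code. A repair group is a subset $A\subseteq\{1,\dots,n\}$ such that for every $j\in A$ and every codeword $c$, the coordinate $c_j$ is a function of $(c_l)_{l\in A\setminus\{j\}}$. *)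

From mathcomp Require Import all_boot all_order.
Set Implicit Arguments. Unset Strict Implicit. Unset Printing Implicit Defensive.

(* Codes of length n over a finite alphabet Sigma: sets of words 'I_n -> Sigma.
   Coordinates are indexed 0..n-1 (the paper's 1..n). *)

Definition determined_by (Sigma : finType) (n : nat)
  (C : {set {ffun 'I_n -> Sigma}}) (I : {set 'I_n}) (i : 'I_n) : Prop :=
  forall c c', c \in C -> c' \in C -> (forall l, l \in I -> c l = c' l) -> c i = c' i.

Definition has_locality (Sigma : finType) (n : nat)
  (C : {set {ffun 'I_n -> Sigma}}) (r : nat) : Prop :=
  forall i : 'I_n, exists I : {set 'I_n},
    [/\ i \notin I, #|I| = r & determined_by C I i].

Definition repair_group (Sigma : finType) (n : nat)
  (C : {set {ffun 'I_n -> Sigma}}) (A : {set 'I_n}) : Prop :=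
  forall j, j \in A -> determined_by C (A :\ j) j.

Definition hamming (Sigma : finType) (n : nat) (x y : {ffun 'I_n -> Sigma}) : nat :=
  #|[set i | x i != y i]|.

(* Minimum Hamming distance: min over ordered pairs of distinct codewords.
   The default value n of the min is harmless since every distance is <= n;
   it is only meaningful for |C| >= 2. *)
Definition dmin (Sigma : finType) (n : nat) (C : {set {ffun 'I_n -> Sigma}}) : nat :=
  \big[minn/n]_(x in C) \big[minn/n]_(y in C | y != x) hamming x y.

(* Let N(T) be the number of distinct restrictions of codewords to a set T of
   coordinates.  N is submultiplicative under unions, N(T) <= q^|T|, and a repair
   group A has N(A) <= q^(|A|-1), since one of its coordinates is redundant.
   Write k = s + b r + x with 0 <= x <= r.  The short group A_m, the first b full
   groups and x further coordinates of the next full group form a set T of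
   s + b (r+1) + x = k + b coordinates with N(T) <= q^(s-1+br+x) = q^(k-1) < |C|,
   so two distinct codewords agree on T and d_min <= n - k - b.  The hypotheses on
   k mod r are exactly what makes b + 1 = ceil(k/r). *)
From mathcomp Require Import all_boot all_order all_algebra zify.
Import Order.TTheory.
Set Implicit Arguments. Unset Strict Implicit. Unset Printing Implicit Defensive.

Lemma leq_imset_card_factor (T U V : finType) (D : {set T}) (f : T -> U) (g : T -> V) :
  {in D &, forall x y, f x = f y -> g x = g y} -> #|g @: D| <= #|f @: D|.
Proof.
move=> gf; case: (set_0Vmem D) => [->|[x0 x0D]]; first by rewrite !imset0 cards0.
pose h u := g (odflt x0 [pick x in D | f x == u]).
apply: (leq_trans _ (leq_imset_card h _)); apply: subset_leq_card.
apply/subsetP => _ /imsetP[x xD ->]; apply/imsetP; exists (f x); first exact: imset_f.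
rewrite /h; case: pickP => [y /andP[yD /eqP fyx]|/(_ x)]; last by rewrite xD eqxx.
exact: gf.
Qed.

Lemma exists_subset_card (T : finType) (B : {set T}) x :
  x <= #|B| -> exists2 X : {set T}, X \subset B & #|X| = x.
Proof.
case/card_geqP => s [s_uniq <- sB]; exists [set y in s].
  by apply/subsetP => y; rewrite inE => /sB.
by rewrite cardsE; apply/card_uniqP.
Qed.

Section Restriction.
Variables (Sigma : finType) (n : nat) (C : {set {ffun 'I_n -> Sigma}}).

Definition restr (T : {set 'I_n}) (c : {ffun 'I_n -> Sigma}) : {ffun 'I_n -> option Sigma} :=
  [ffun i => if i \in T then Some (c i) else None].

Definition num_restr (T : {set 'I_n}) : nat := #|restr T @: C|.

Lemma restrP T c c' : restr T c = restr T c' <-> {in T, forall i, c i = c' i}.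
Proof.
split=> [/ffunP E i iT|E].
  by move: (E i); rewrite !ffunE iT => -[].
by apply/ffunP => i; rewrite !ffunE; case: ifP => // /E ->.
Qed.

Lemma leq_num_restrU (T1 T2 : {set 'I_n}) :
  num_restr (T1 :|: T2) <= num_restr T1 * num_restr T2.
Proof.
rewrite /num_restr -cardsX.
apply: (leq_trans (leq_imset_card_factor (f := fun c => (restr T1 c, restr T2 c)) _)).
  move=> c c' _ _ [/restrP E1 /restrP E2]; apply/restrP => i.
  by rewrite in_setU => /orP[/E1|/E2].
apply: subset_leq_card; apply/subsetP => _ /imsetP[c cC ->].
by rewrite in_setX !imset_f.
Qed.

Lemma num_restr0 : num_restr set0 <= 1.
Proof.
rewrite /num_restr -card_unit.
apply: (leq_trans (leq_imset_card_factor (f := fun _ => tt) _)); last exact: max_card.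
by move=> c c' _ _ _; apply/restrP => i; rewrite inE.
Qed.

Lemma num_restr1 i : num_restr [set i] <= #|Sigma|.
Proof.
apply: (leq_trans (leq_imset_card_factor (f := fun c : {ffun 'I_n -> Sigma} => c i) _)).
  by move=> c c' _ _ E; apply/restrP => j /set1P ->.
exact: max_card.
Qed.

Lemma num_restr_card (T : {set 'I_n}) : num_restr T <= #|Sigma| ^ #|T|.
Proof.
move cardT: #|T| => k; elim: k T cardT => [|k IH] T cardT.
  by move/eqP: cardT; rewrite cards_eq0 => /eqP ->; exact: num_restr0.
have [i iT] : exists i, i \in T by apply/set0Pn; rewrite -card_gt0 cardT.
rewrite -(setD1K iT) expnS; apply: (leq_trans (leq_num_restrU _ _)).
apply: leq_mul; first exact: num_restr1.
by apply: IH; move: cardT; rewrite (cardsD1 i) iT => -[].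
Qed.

Lemma num_restr_repair_group (A : {set 'I_n}) :
  repair_group C A -> 0 < #|A| -> num_restr A <= #|Sigma| ^ #|A|.-1.
Proof.
move=> repA; rewrite card_gt0 => /set0Pn[j jA].
rewrite (cardsD1 j A) jA; apply: leq_trans (num_restr_card (A :\ j)).
apply: leq_imset_card_factor => c c' cC c'C /restrP E; apply/restrP => i iA.
have [->|ij] := eqVneq i j; first exact: repA.
by apply: E; rewrite in_setD1 ij.
Qed.

Lemma num_restrT : num_restr setT = #|C|.
Proof. by apply: card_in_imset => c c' _ _ /restrP E; apply/ffunP => i; apply: E. Qed.

Lemma dmin_le_agree (T : {set 'I_n}) c c' : c \in C -> c' \in C -> c' != c ->
  {in T, forall i, c i = c' i} -> dmin C + #|T| <= n.
Proof.
move=> cC c'C c'c E.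
suff dmin_le : dmin C <= #|~: T|.
  by apply: leq_trans (leq_add dmin_le (leqnn _)) _; rewrite addnC cardsC card_ord.
have min_le (I : finType) (P : pred I) F j : P j -> \big[minn/n]_(i | P i) F i <= F j.
  by move=> Pj; have := bigmin_le_cond (T := nat) n F Pj; rewrite minEnat leEnat.
apply: leq_trans (min_le _ _ _ c cC) _.
apply: leq_trans (min_le _ _ _ c' _) _; first by rewrite c'C c'c.
apply: subset_leq_card; apply/subsetP => i; rewrite !inE.
by apply: contra => iT; rewrite E.
Qed.

Lemma dmin_num_restr (T : {set 'I_n}) : num_restr T < #|C| -> dmin C + #|T| <= n.
Proof.
move=> lt_TC; apply: contraTT lt_TC; rewrite -leqNgt => no_agree.
rewrite /num_restr card_in_imset //= => c c' cC c'C /restrP E.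
apply/eqP; apply: contraNT no_agree => c'c.
by apply: (dmin_le_agree c'C cC) => // i /E.
Qed.

End Restriction.

Section PrefixUnions.
Variables (Sigma : finType) (n r s Q k : nat) (C : {set {ffun 'I_n -> Sigma}}).
Variable A : 'I_Q.+1 -> {set 'I_n}.
Hypotheses (repA : forall i, repair_group C (A i))
  (disjA : forall i j, i != j -> [disjoint A i & A j])
  (cardA : forall i : 'I_Q.+1, i < Q -> #|A i| = r.+1)
  (cardA_last : #|A ord_max| = s) (s_gt0 : 0 < s).

Definition prefix_union (j : nat) : {set 'I_n} :=
  A ord_max :|: \bigcup_(i < j) A (inord i).

Lemma card_inord j : j < Q -> #|A (inord j)| = r.+1.
Proof. by move=> jQ; rewrite cardA // inordK // ltnW. Qed.

Lemma prefix_unionS j : prefix_union j.+1 = prefix_union j :|: A (inord j).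
Proof. by rewrite /prefix_union big_ord_recr setUA. Qed.

Lemma disjoint_prefix_union j : j < Q -> [disjoint prefix_union j & A (inord j)].
Proof.
move=> jQ; rewrite -setI_eq0 setIUl setU_eq0 !setI_eq0; apply/andP; split.
  by apply: disjA; apply/eqP => /(congr1 val); rewrite /= inordK //; lia.
rewrite disjoint_sym; apply: bigcup_disjoint => i _; apply: disjA.
have lt_ij := ltn_ord i.
by apply/eqP => /(congr1 val); rewrite /= !inordK; lia.
Qed.

Lemma card_prefix_union j : j <= Q -> #|prefix_union j| = s + j * r.+1.
Proof.
elim: j => [_|j IH jQ]; first by rewrite /prefix_union big_ord0 setU0 cardA_last addn0.
rewrite prefix_unionS cardsU (disjoint_setI0 (disjoint_prefix_union jQ)) cards0 subn0.
by rewrite IH ?(ltnW jQ) // card_inord // mulSnr addnA.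
Qed.

Lemma num_restr_prefix_union j : j <= Q ->
  num_restr C (prefix_union j) <= #|Sigma| ^ (s.-1 + j * r).
Proof.
elim: j => [_|j IH jQ].
  rewrite /prefix_union big_ord0 setU0 addn0 -cardA_last.
  by rewrite num_restr_repair_group // cardA_last.
rewrite prefix_unionS mulSn addnCA expnD mulnC.
apply: leq_trans (leq_num_restrU _ _ _) (leq_mul (IH (ltnW jQ)) _).
have -> : r = #|A (inord j)|.-1 by rewrite card_inord.
by rewrite num_restr_repair_group // card_inord.
Qed.

Hypotheses (Sigma_gt1 : 1 < #|Sigma|) (cardC : #|C| = #|Sigma| ^ k)
  (n_eq : n = s + Q * r.+1).

Lemma prefix_union_full : prefix_union Q = setT.
Proof.
by apply/eqP; rewrite eqEcard subsetT cardsT card_ord card_prefix_union // -n_eq leqnn.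
Qed.

Lemma lt_prefix_length b : s + b * r <= k -> b < Q.
Proof.
move=> k_ge; rewrite ltnNge; apply/negP => Qb.
have := num_restr_prefix_union (leqnn Q).
rewrite prefix_union_full num_restrT cardC leq_exp2l //.
have : Q * r <= b * r by rewrite leq_mul2r Qb orbT.
lia.
Qed.

Lemma dmin_prefix_union_bound b x :
  k = s + b * r + x -> x <= r -> dmin C + (k + b) <= n.
Proof.
move=> k_eq x_le_r; have bQ : b < Q by apply: lt_prefix_length; lia.
have [X XA cardX] : exists2 X : {set 'I_n}, X \subset A (inord b) & #|X| = x.
  by apply: exists_subset_card; rewrite card_inord // ltnW.
have disjX : [disjoint prefix_union b & X].
  by apply: disjointWr XA (disjoint_prefix_union bQ).
have <- : #|prefix_union b :|: X| = k + b.
  rewrite cardsU (disjoint_setI0 disjX) cards0 subn0.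
  by rewrite card_prefix_union ?cardX 1?ltnW //; lia.
apply: dmin_num_restr; apply: leq_ltn_trans (leq_num_restrU _ _ _) _.
apply: leq_ltn_trans (leq_mul (num_restr_prefix_union (ltnW bQ)) (num_restr_card C X)) _.
by rewrite cardC cardX -expnD ltn_exp2l //; lia.
Qed.

End PrefixUnions.

Lemma ceil_divnMDS a t d : t < d -> (a * d + t.+1 + d.-1) %/ d = a.+1.
Proof.
move=> t_lt; have d_gt0 : 0 < d by apply: leq_ltn_trans t_lt.
rewrite -addnA addSnnS prednK // [t + d]addnC addnA -mulSnr.
by rewrite divnMDl // divn_small ?addn0.
Qed.

Lemma ceil_divn_ndvd n d : n %% d.+1 != 0 -> (n + d) %/ d.+1 = (n %/ d.+1).+1.
Proof.
rewrite -lt0n => mod_gt0.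
have := ceil_divnMDS (n %/ d.+1) (leq_ltn_trans (leq_pred _) (ltn_pmod n (ltn0Sn d))).
by rewrite /= prednK // -divn_eq.
Qed.

Lemma split_ceil_divn k r s : 0 < k -> 0 < s <= r ->
  r %| k \/ ~~ (r %| k) /\ s <= k %% r ->
  exists b x, [/\ k = s + b * r + x, x <= r & (k + r.-1) %/ r = b.+1].
Proof.
move=> k_gt0 /andP[s_gt0 s_le_r]; have r_gt0 : 0 < r by apply: leq_trans s_le_r.
case=> [/dvdnP[a k_eq]|[k_ndvd s_le_mod]].
  have a_gt0 : 0 < a by move: k_gt0; rewrite k_eq muln_gt0 => /andP[].
  exists a.-1, (r - s); split.
  - by rewrite k_eq -{1}(prednK a_gt0) mulSn; lia.
  - exact: leq_subr.
  have -> : k = a.-1 * r + r.-1.+1 by rewrite prednK // k_eq -{1}(prednK a_gt0) mulSnr.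
  by rewrite ceil_divnMDS // ltn_predL.
have mod_gt0 : 0 < k %% r by rewrite lt0n.
have mod_lt : k %% r < r by rewrite ltn_pmod.
exists (k %/ r), (k %% r - s); split.
- by rewrite {1}(divn_eq k r); lia.
- exact: leq_trans (leq_subr _ _) (ltnW mod_lt).
rewrite {1}(divn_eq k r) -(prednK mod_gt0) ceil_divnMDS //.
exact: leq_ltn_trans (leq_pred _) mod_lt.
Qed.

Theorem theorem2 (Sigma : finType) (q n k r : nat)
  (C : {set {ffun 'I_n -> Sigma}}) (m : nat) (A : 'I_m -> {set 'I_n}) :
  2 <= q -> #|Sigma| = q ->
  #|C| = q ^ k -> 0 < k ->
  has_locality C r ->
  n %% r.+1 != 0 -> n %% r.+1 != 1 ->
  m = divn (n + r) r.+1 ->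
  (forall i, repair_group C (A i)) ->
  (forall i j, i != j -> [disjoint A i & A j]) ->
  (forall i : 'I_m, i.+1 < m -> #|A i| = r.+1) ->
  (forall i : 'I_m, i.+1 = m -> #|A i| = n %% r.+1) ->
  (r %| k \/ (~~ (r %| k) /\ n %% r.+1 <= k %% r)) ->
  ((dmin C)%:Z <= (n%:Z - k%:Z - (divn (k + r.-1) r)%:Z + 1)%R)%R.
Proof.
move=> q_ge2 cardS cardC k_gt0 _ s_neq0 _ m_eq repA disjA cardA cardA_last k_split.
rewrite ceil_divn_ndvd // in m_eq; subst m.
set s := n %% r.+1 in s_neq0 cardA_last k_split.
set Q := n %/ r.+1 in A repA disjA cardA cardA_last.
have s_gt0 : 0 < s by rewrite lt0n.
have s_bounds : 0 < s <= r by rewrite s_gt0 -ltnS ltn_mod.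
have [b [x [k_eq x_le_r ->]]] := split_ceil_divn k_gt0 s_bounds k_split.
have n_eq : n = s + Q * r.+1 by rewrite addnC -divn_eq.
have q_gt1 : 1 < #|Sigma| by rewrite cardS.
rewrite -cardS in cardC.
have := dmin_prefix_union_bound repA disjA cardA (cardA_last ord_max erefl)
  s_gt0 q_gt1 cardC n_eq k_eq x_le_r.
lia.
Qed.
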